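(* Let $\Gamma$ be a geometry of type $C_3$. Then every closed path of $\Gamma$ based at a point is homotopic to a primitive path.
   Context: A geometry of type $C_3$ is a (residually connected) rank-3 Tits geometry belonging to the diagram $\circ\!-\!\circ\!=\!\circ$, with types $1,2,3$ called points, lines and planes respectively (residue of a plane: a projective plane on its points and lines; residue of a point: a generalized quadrangle on its lines and planes; residue of a line: a generalized digon). Paths and homotopy: a path is a sequence of elements with consecutive elements incident; homotopy $\sim$ is the equivalence relation on paths with fixed endpoints generated by $(x,y,x)\leftrightarrow(x)$ and $(x,y,z)\leftrightarrow(x,z)$ for flags $\{x,y,z\}$ (homotopy in the flag complex). A primitive path is a closed path $(p,L,q,M,p)$ with $p,q$ points and $L,M$ lines; it is degenerate if $p=q$ or $L=M$. *)

From Stdlib Require Import List Relations.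
Import ListNotations.
Set Implicit Arguments.

(** Types 1,2,3 = points, lines, planes. *)
Inductive ctype : Type := Pt | Ln | Pl.

Section Geometry.
Variables (X : Type) (t : X -> ctype) (I : X -> X -> Prop).

Definition incidence_system : Prop :=
  (forall x, I x x) /\ (forall x y, I x y -> I y x) /\
  (forall x y, I x y -> t x = t y -> x = y).

Definition is_flag (F : X -> Prop) : Prop := forall x y, F x -> F y -> I x y.

Definition missing_type (F : X -> Prop) (T : ctype) : Prop :=
  ~ (exists x, F x /\ t x = T).

Definition residue (F : X -> Prop) (y : X) : Prop :=
  (forall x, F x -> I x y) /\ (forall x, F x -> t x <> t y).

Definition connected (R : X -> Prop) : Prop :=
  (exists x, R x) /\
  forall x y, R x -> R y ->
    clos_refl_trans X (fun a b => R a /\ R b /\ I a b) x y.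

Definition every_flag_in_chamber : Prop :=
  forall F, is_flag F -> exists C, is_flag C /\ (forall x, F x -> C x) /\
    forall T, exists x, C x /\ t x = T.

Definition residually_connected : Prop :=
  (forall F, is_flag F ->
     (exists T1 T2, T1 <> T2 /\ missing_type F T1 /\ missing_type F T2) ->
     connected (residue F)) /\
  (forall F, is_flag F ->
     (exists T, missing_type F T /\ forall T', T' <> T -> ~ missing_type F T') ->
     exists y, residue F y).

Definition projective_plane (P L : X -> Prop) : Prop :=
  (forall p q, P p -> P q -> p <> q ->
     exists l, L l /\ I p l /\ I q l /\
       forall l', L l' -> I p l' -> I q l' -> l' = l) /\
  (forall l m, L l -> L m -> l <> m ->
     exists p, P p /\ I p l /\ I p m /\
       forall p', P p' -> I p' l -> I p' m -> p' = p) /\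
  (exists a b c d, P a /\ P b /\ P c /\ P d /\
     a <> b /\ a <> c /\ a <> d /\ b <> c /\ b <> d /\ c <> d /\
     (forall l, L l -> ~ (I a l /\ I b l /\ I c l)) /\
     (forall l, L l -> ~ (I a l /\ I b l /\ I d l)) /\
     (forall l, L l -> ~ (I a l /\ I c l /\ I d l)) /\
     (forall l, L l -> ~ (I b l /\ I c l /\ I d l))).

(** Generalized quadrangle (Payne-Thas, orders s,t >= 1, possibly infinite)
    with point set P, line set L, incidence I. *)
Definition gen_quadrangle (P L : X -> Prop) : Prop :=
  (forall x y W W', P x -> P y -> x <> y -> L W -> L W' ->
     I x W -> I y W -> I x W' -> I y W' -> W = W') /\
  (forall x Y, P x -> L Y -> ~ I x Y ->
     exists z, P z /\ I z Y /\ (exists W, L W /\ I x W /\ I z W) /\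
       forall z', P z' -> I z' Y -> (exists W, L W /\ I x W /\ I z' W) -> z' = z) /\
  (forall x, P x -> exists W1 W2, L W1 /\ L W2 /\ W1 <> W2 /\ I x W1 /\ I x W2) /\
  (forall W, L W -> exists x y, P x /\ P y /\ x <> y /\ I x W /\ I y W).

Definition gen_digon (P L : X -> Prop) : Prop :=
  forall x y, P x -> L y -> I x y.

Definition of_type_in (T : ctype) (z : X) (y : X) : Prop := t y = T /\ I y z.

Definition C3_geometry : Prop :=
  incidence_system /\ every_flag_in_chamber /\ residually_connected /\
  (forall z, t z = Pl -> projective_plane (of_type_in Pt z) (of_type_in Ln z)) /\
  (forall z, t z = Pt -> gen_quadrangle (of_type_in Ln z) (of_type_in Pl z)) /\
  (forall z, t z = Ln -> gen_digon (of_type_in Pt z) (of_type_in Pl z)).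

Fixpoint chain (x : X) (l : list X) : Prop :=
  match l with
  | [] => True
  | y :: l' => I x y /\ chain y l'
  end.

Definition is_path (l : list X) : Prop :=
  match l with
  | [] => False
  | x :: l' => chain x l'
  end.

Definition elem_move (l1 l2 : list X) : Prop :=
  (exists a b x y, l1 = a ++ [x; y; x] ++ b /\ l2 = a ++ [x] ++ b) \/
  (exists a b x y z, I x y /\ I y z /\ I x z /\
     l1 = a ++ [x; y; z] ++ b /\ l2 = a ++ [x; z] ++ b).

Definition path_move (l1 l2 : list X) : Prop :=
  is_path l1 /\ is_path l2 /\ elem_move l1 l2.

Definition homotopic (l1 l2 : list X) : Prop :=
  clos_refl_sym_trans (list X) path_move l1 l2.

Definition closed_path_at (p : X) (l : list X) : Prop :=
  is_path l /\ hd_error l = Some p /\ last l p = p.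

Definition primitive_path (l : list X) : Prop :=
  exists p L q M, l = [p; L; q; M; p] /\
    t p = Pt /\ t q = Pt /\ t L = Ln /\ t M = Ln /\ is_path l.

End Geometry.

(* Every path from a point p is homotopic to one of the form
   p - K - e - K' - f - (last vertex) with K, K' lines and e, f points.
   Appending a vertex w, the step f - v - w becomes f - N - f' - w (when v is a
   plane, by contracting inside it), and the three lines K, K', N are reduced
   to two: the generalized quadrangles in the residues of the intermediate
   points give planes pi1, pi2, pi3 through consecutive lines, and the two
   lines shared with pi2 meet in a point e of pi2.  A subpath all of whose
   elements are incident with one element contracts onto it, which performs
   each rewriting.  For a closed path, f is a point incident with p, so f = p. *)

From Stdlib Require Import List Relations Classical.
Import ListNotations.

Lemma last_cons_default {A} (x : A) l d : last (x :: l) d = last l x.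
Proof.
  revert x d; induction l as [|y l IH]; intros x d; [reflexivity|].
  change (last (y :: l) d = last (y :: l) x); now rewrite !IH.
Qed.

Lemma last_app_default {A} (l b : list A) d : last (l ++ b) d = last b (last l d).
Proof.
  revert d; induction l as [|x l IH]; intros d; [reflexivity|].
  now rewrite <- app_comm_cons, !last_cons_default.
Qed.

Lemma Forall_last {A} {P : A -> Prop} {x l} : Forall P (x :: l) -> P (last l x).
Proof.
  revert x; induction l as [|y l IH]; intros x H; inversion_clear H; [assumption|].
  rewrite last_cons_default; now apply IH.
Qed.

Section Paths.
Context {X : Type} {I : X -> X -> Prop}.

Lemma chain_app x l1 l2 :
  chain I x (l1 ++ l2) <-> chain I x l1 /\ chain I (last l1 x) l2.
Proof.
  revert x; induction l1 as [|y l1 IH]; intros x; simpl; [tauto|].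
  rewrite IH, <- (last_cons_default y l1 x); simpl; tauto.
Qed.

Lemma is_path_app_cons a x l b :
  is_path I (a ++ (x :: l) ++ b) <->
  is_path I (a ++ [x]) /\ chain I x l /\ chain I (last l x) b.
Proof.
  destruct a as [|w a]; simpl; rewrite !chain_app; simpl; rewrite ?chain_app; tauto.
Qed.

Lemma elem_move_app a b {l1 l2} :
  elem_move I l1 l2 -> elem_move I (a ++ l1 ++ b) (a ++ l2 ++ b).
Proof.
  intros [(a' & b' & x & y & -> & ->) | (a' & b' & x & y & z & ? & ? & ? & -> & ->)].
  - left; exists (a ++ a'), (b' ++ b), x, y; now rewrite <- !app_assoc.
  - right; exists (a ++ a'), (b' ++ b), x, y, z; now rewrite <- !app_assoc.
Qed.

Lemma elem_move_endpoints {l1 l2} :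
  elem_move I l1 l2 ->
  exists h m1 m2, l1 = h :: m1 /\ l2 = h :: m2 /\ forall d, last l1 d = last l2 d.
Proof.
  intros [(a & b & x & y & -> & ->) | (a & b & x & y & z & _ & _ & _ & -> & ->)];
    destruct a as [|w a]; eexists _, _, _;
    (split; [reflexivity | split; [reflexivity|]]); intros d; now rewrite !last_app_default.
Qed.

Lemma path_move_is_path_app a b {l1 l2} :
  path_move I l1 l2 -> (is_path I (a ++ l1 ++ b) <-> is_path I (a ++ l2 ++ b)).
Proof.
  intros (P1 & P2 & M).
  destruct (elem_move_endpoints M) as (h & m1 & m2 & -> & -> & E).
  specialize (E h); rewrite !last_cons_default in E.
  simpl in P1, P2; rewrite !is_path_app_cons, E; tauto.
Qed.

Lemma homotopic_is_path_app a b {l1 l2} :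
  homotopic I l1 l2 -> (is_path I (a ++ l1 ++ b) <-> is_path I (a ++ l2 ++ b)).
Proof.
  induction 1 as [l1 l2 H | | |]; [now apply path_move_is_path_app | tauto..].
Qed.

Lemma homotopic_app a b {l1 l2} :
  homotopic I l1 l2 -> is_path I (a ++ l1 ++ b) ->
  homotopic I (a ++ l1 ++ b) (a ++ l2 ++ b).
Proof.
  induction 1 as [l1 l2 H | l | l1 l2 H IH | l1 l2 l3 H12 IH12 H23 IH23]; intros P.
  - apply rst_step; split; [exact P|split].
    + now apply (path_move_is_path_app a b H).
    + apply elem_move_app, H.
  - apply rst_refl.
  - apply rst_sym, IH; now apply (homotopic_is_path_app a b H).
  - eapply rst_trans; [now apply IH12|].
    apply IH23; now apply (homotopic_is_path_app a b H12).
Qed.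

Lemma homotopic_app_l a {l1 l2} :
  homotopic I l1 l2 -> is_path I (a ++ l1) -> homotopic I (a ++ l1) (a ++ l2).
Proof.
  intros H P; rewrite <- (app_nil_r l1), <- (app_nil_r l2).
  apply homotopic_app; now rewrite ?app_nil_r.
Qed.

Lemma homotopic_shortcut {x y z} :
  I x y -> I y z -> I x z -> homotopic I [x; y; z] [x; z].
Proof.
  intros Hxy Hyz Hxz; apply rst_step; repeat split; auto.
  right; exists [], [], x, y, z; auto.
Qed.

Hypothesis I_sym : forall x y, I x y -> I y x.

Lemma homotopic_spike {x y} : I x y -> homotopic I [x; y; x] [x].
Proof.
  intros Hxy; apply rst_step; repeat split; auto.
  left; now exists [], [], x, y.
Qed.

Lemma homotopic_cone z {l x} :
  I x z -> Forall (fun y => I y z) l -> chain I x l ->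
  homotopic I (x :: l) [x; z; last l x].
Proof.
  revert x; induction l as [|y l IH]; intros x Hxz Hl Hc.
  - apply rst_sym, homotopic_spike, Hxz.
  - inversion_clear Hl as [|? ? Hyz Hl']; destruct Hc as [Hxy Hc].
    rewrite last_cons_default.
    eapply rst_trans; [apply (homotopic_app_l [x] (IH y Hyz Hl' Hc)); now split|].
    pose proof (Forall_last (Forall_cons y Hyz Hl')) as Hw; simpl in Hw.
    apply (homotopic_app [] [last l y] (homotopic_shortcut Hxy Hyz Hxz)).
    simpl; auto.
Qed.

Lemma homotopic_in_star z {x m1 m2} :
  I x z -> Forall (fun y => I y z) m1 -> Forall (fun y => I y z) m2 ->
  chain I x m1 -> chain I x m2 -> last m1 x = last m2 x ->
  homotopic I (x :: m1) (x :: m2).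
Proof.
  intros Hx H1 H2 C1 C2 E.
  eapply rst_trans; [now apply (homotopic_cone z)|].
  rewrite E; apply rst_sym; now apply homotopic_cone.
Qed.

End Paths.

Lemma ctype_third {a b c d : ctype} :
  a <> b -> c <> a -> c <> b -> d <> a -> d <> b -> d = c.
Proof. destruct a, b, c, d; congruence. Qed.

Section C3Geometry.
Context {X : Type} {t : X -> ctype} {I : X -> X -> Prop} (HG : C3_geometry t I).

Lemma incid_refl x : I x x.
Proof. now destruct HG as ((Hrefl & _) & _). Qed.

Lemma incid_sym {x y} : I x y -> I y x.
Proof. now destruct HG as ((_ & Hsym & _) & _); apply Hsym. Qed.

Lemma incid_same_type {x y} : I x y -> t x = t y -> x = y.
Proof. now destruct HG as ((_ & _ & Htype) & _); apply Htype. Qed.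

#[local] Hint Resolve incid_refl incid_sym : core.

Ltac solve_path := solve [simpl; repeat split; auto].

Lemma incid_point_plane {x L pi} :
  t x = Pt -> t L = Ln -> I x L -> I L pi -> t pi = Pl -> I x pi.
Proof.
  intros Tx TL HxL HLpi Tpi; destruct HG as (_ & _ & _ & _ & _ & Hdigon).
  apply (Hdigon L TL x pi); split; auto.
Qed.

Lemma flag_complete {x y} T :
  I x y -> t x <> t y -> T <> t x -> T <> t y ->
  exists z, t z = T /\ I x z /\ I y z.
Proof.
  intros Hxy Dxy Dx Dy.
  destruct HG as (_ & _ & (_ & Hcorank1) & _).
  destruct (Hcorank1 (fun u => u = x \/ u = y)) as (z & Hz & Tz).
  - intros a b [-> | ->] [-> | ->]; auto.
  - exists T; split.
    + intros (u & [-> | ->] & E); congruence.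
    + intros T' HT' Hm; apply Hm.
      destruct (classic (T' = t x)) as [E|E]; [now exists x; auto|].
      destruct (classic (T' = t y)) as [E'|E']; [now exists y; auto|].
      exfalso; apply HT'; now apply (ctype_third Dxy).
  - exists z; repeat split; try apply Hz; auto.
    specialize (Tz x (or_introl eq_refl)) as Tzx; specialize (Tz y (or_intror eq_refl)).
    apply (ctype_third Dxy); auto.
Qed.

Lemma exists_line_on_point {x} : t x = Pt -> exists K, t K = Ln /\ I x K.
Proof.
  intros Tx.
  destruct HG as (_ & _ & (Hcorank2 & _) & _).
  destruct (Hcorank2 (fun u => u = x)) as ((z & Hz & Tz) & _).
  - intros a b -> ->; auto.
  - exists Ln, Pl; split; [discriminate|].
    split; intros (u & -> & E); congruence.
  - specialize (Hz x eq_refl); specialize (Tz x eq_refl).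
    destruct (t z) eqn:Ez; [congruence | now exists z |].
    destruct (flag_complete Ln Hz) as (K & TK & HK & _); try congruence.
    exists K; repeat split; auto.
Qed.

Lemma exists_line_on_points_of_plane {pi x y} :
  t pi = Pl -> t x = Pt -> t y = Pt -> I x pi -> I y pi ->
  exists K, t K = Ln /\ I x K /\ I y K /\ I K pi.
Proof.
  intros Tpi Tx Ty Hx Hy.
  destruct (classic (x = y)) as [<- | Nxy].
  - destruct (flag_complete Ln Hx) as (K & TK & HK & HKpi); try congruence.
    exists K; repeat split; auto.
  - destruct HG as (_ & _ & _ & Hplane & _).
    destruct (proj1 (Hplane pi Tpi) x y (conj Tx Hx) (conj Ty Hy) Nxy)
      as (K & (TK & HKpi) & HxK & HyK & _).
    exists K; repeat split; auto.
Qed.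

Lemma exists_point_on_lines_of_plane {pi N M} :
  t pi = Pl -> t N = Ln -> t M = Ln -> I N pi -> I M pi ->
  exists e, t e = Pt /\ I e N /\ I e M /\ I e pi.
Proof.
  intros Tpi TN TM HN HM.
  destruct (classic (N = M)) as [<- | NM].
  - destruct (flag_complete Pt HN) as (e & Te & HeN & Hepi); try congruence.
    exists e; repeat split; auto.
  - destruct HG as (_ & _ & _ & Hplane & _).
    destruct (proj1 (proj2 (Hplane pi Tpi)) N M (conj TN HN)
      (conj TM HM) NM) as (e & (Te & Hepi) & HeN & HeM & _).
    exists e; repeat split; auto.
Qed.

(* The generalized quadrangle axiom in the residue of c. *)
Lemma common_plane_on_point {c L pi} :
  t c = Pt -> t L = Ln -> t pi = Pl -> I c L -> I c pi ->
  exists M pi', t M = Ln /\ t pi' = Pl /\ I c M /\ I M pi /\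
    I L pi' /\ I M pi' /\ I c pi'.
Proof.
  intros Tc TL Tpi HcL Hcpi.
  destruct (classic (I L pi)) as [HLpi | NLpi].
  - now exists L, pi.
  - destruct HG as (_ & _ & _ & _ & Hquad & _).
    destruct (proj1 (proj2 (Hquad c Tc)) L pi (conj TL (incid_sym HcL))
      (conj Tpi (incid_sym Hcpi)) NLpi)
      as (M & (TM & HMc) & HMpi & (W & (TW & HWc) & HLW & HMW) & _).
    exists M, W; repeat split; auto.
Qed.

Lemma homotopic_line_point_step {f v w} :
  t f = Pt -> I f v -> I v w ->
  exists K f', t K = Ln /\ t f' = Pt /\ chain I f [K; f'; w] /\
    homotopic I [f; v; w] [f; K; f'; w].
Proof.
  intros Tf Hfv Hvw.
  destruct (classic (I f w)) as [Hfw | Nfw].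
  { destruct (exists_line_on_point Tf) as (K & TK & HfK).
    exists K, f; repeat split; auto.
    eapply rst_trans; [now apply homotopic_shortcut|].
    apply rst_sym, (homotopic_app [] [w] (homotopic_spike (@incid_sym) HfK)); solve_path. }
  destruct (t v) eqn:Tv.
  - exfalso; apply Nfw; rewrite (incid_same_type Hfv); congruence.
  - destruct (t w) eqn:Tw.
    + exists v, w; repeat split; auto.
      apply rst_sym, (homotopic_app [f] [] (homotopic_shortcut Hvw (incid_refl w) Hvw)).
      solve_path.
    + exfalso; apply Nfw; rewrite <- (incid_same_type Hvw); congruence.
    + destruct HG as (_ & _ & _ & _ & _ & Hdigon).
      exfalso; apply Nfw, (Hdigon v Tv f w); split; auto.
  - assert (exists f', t f' = Pt /\ I f' w /\ I f' v) as (f' & Tf' & Hf'w & Hf'v).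
    { destruct (t w) eqn:Tw.
      - now exists w; auto.
      - destruct (flag_complete Pt Hvw) as (f' & Tf' & Hf'v & Hf'w); try congruence.
        exists f'; auto.
      - exfalso; apply Nfw; rewrite <- (incid_same_type Hvw); congruence. }
    destruct (exists_line_on_points_of_plane Tv Tf Tf' Hfv Hf'v)
      as (K & TK & HfK & Hf'K & HKv).
    exists K, f'; repeat split; auto.
    apply (homotopic_in_star (@incid_sym) v); solve_path; repeat constructor; auto.
Qed.

Lemma homotopic_three_lines_to_two {a L1 b L2 c L3 d} :
  t a = Pt -> t b = Pt -> t c = Pt -> t d = Pt ->
  t L1 = Ln -> t L2 = Ln -> t L3 = Ln ->
  chain I a [L1; b; L2; c; L3; d] ->
  exists K e K', t K = Ln /\ t e = Pt /\ t K' = Ln /\ chain I a [K; e; K'; d] /\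
    homotopic I [a; L1; b; L2; c; L3; d] [a; K; e; K'; d].
Proof.
  intros Ta Tb Tc Td T1 T2 T3 (aL1 & L1b & bL2 & L2c & cL3 & L3d & _).
  destruct (flag_complete Pl cL3) as (pi3 & Tp3 & cp3 & L3p3); try congruence.
  destruct (common_plane_on_point Tc T2 Tp3 (incid_sym L2c) cp3)
    as (M & pi2 & TM & Tp2 & cM & Mp3 & L2p2 & Mp2 & cp2).
  pose proof (incid_point_plane Tb T2 bL2 L2p2 Tp2) as bp2.
  destruct (common_plane_on_point Tb T1 Tp2 (incid_sym L1b) bp2)
    as (N & pi1 & TN & Tp1 & bN & Np2 & L1p1 & Np1 & bp1).
  destruct (exists_point_on_lines_of_plane Tp2 TN TM Np2 Mp2) as (e & Te & eN & eM & ep2).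
  pose proof (incid_point_plane Ta T1 aL1 L1p1 Tp1) as ap1.
  pose proof (incid_point_plane Te TN eN Np1 Tp1) as ep1.
  pose proof (incid_point_plane Te TM eM Mp3 Tp3) as ep3.
  pose proof (incid_point_plane Td T3 (incid_sym L3d) L3p3 Tp3) as dp3.
  destruct (exists_line_on_points_of_plane Tp1 Ta Te ap1 ep1) as (K & TK & aK & eK & Kp1).
  destruct (exists_line_on_points_of_plane Tp3 Te Td ep3 dp3) as (K' & TK' & eK' & dK' & K'p3).
  exists K, e, K'; repeat split; auto.
  (* insert the detour c - M - e - M - c, then contract inside pi2, pi1, pi3 *)
  assert (Hdetour : homotopic I [c] [c; M; e; M; c]).
  { apply rst_sym; eapply rst_trans.
    - apply (homotopic_app [c] [c] (homotopic_spike (@incid_sym) (incid_sym eM))); solve_path.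
    - apply homotopic_spike; auto. }
  eapply rst_trans; [apply (homotopic_app [a; L1; b; L2] [L3; d] Hdetour); solve_path|].
  assert (H2 : homotopic I [b; L2; c; M; e] [b; N; e])
    by (apply (homotopic_in_star (@incid_sym) pi2); solve_path; repeat constructor; auto).
  eapply rst_trans; [apply (homotopic_app [a; L1] [M; c; L3; d] H2); solve_path|].
  assert (H1 : homotopic I [a; L1; b; N; e] [a; K; e])
    by (apply (homotopic_in_star (@incid_sym) pi1); solve_path; repeat constructor; auto).
  eapply rst_trans; [apply (homotopic_app [] [M; c; L3; d] H1); solve_path|].
  assert (H3 : homotopic I [e; M; c; L3; d] [e; K'; d])
    by (apply (homotopic_in_star (@incid_sym) pi3); solve_path; repeat constructor; auto).
  apply (homotopic_app_l [a; K] H3); solve_path.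
Qed.

Lemma homotopic_two_line_form {p l} :
  t p = Pt -> chain I p l ->
  exists K e K' f, t K = Ln /\ t e = Pt /\ t K' = Ln /\ t f = Pt /\
    chain I p [K; e; K'; f; last l p] /\
    homotopic I (p :: l) [p; K; e; K'; f; last l p].
Proof.
  intros Tp; induction l as [|w l IH] using rev_ind; intros Hchain.
  - destruct (exists_line_on_point Tp) as (K & TK & HpK).
    exists K, p, K, p; repeat split; auto; simpl.
    pose proof (homotopic_spike (@incid_sym) HpK) as Hspike.
    eapply rst_trans; [apply rst_sym, Hspike|].
    eapply rst_trans; [apply rst_sym, (homotopic_app [p; K] [] Hspike); solve_path|].
    pose proof (homotopic_shortcut (incid_sym HpK) (incid_refl p) (incid_sym HpK)) as Hstay.
    apply rst_sym, (homotopic_app [p; K; p] [] Hstay); solve_path.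
  - apply chain_app in Hchain as (Hchain & Hvw & _).
    destruct (IH Hchain) as (K & e & K' & f & TK & Te & TK' & Tf & C1 & H1).
    set (v := last l p) in *.
    simpl in C1; destruct C1 as (pK & Ke & eK' & K'f & fv & _).
    destruct (homotopic_line_point_step Tf fv Hvw) as (N & f' & TN & Tf' & C2 & H2).
    destruct (homotopic_three_lines_to_two Tp Te Tf Tf' TK TK' TN)
      as (K2 & e2 & K2' & TK2 & Te2 & TK2' & C3 & H3).
    { simpl in C2 |- *; tauto. }
    rewrite last_last; exists K2, e2, K2', f'.
    do 4 (split; [assumption|]); split.
    + simpl in C2, C3 |- *; tauto.
    + eapply rst_trans.
      { apply (homotopic_app [] [w] H1); simpl; apply chain_app; now split. }
      eapply rst_trans; [apply (homotopic_app_l [p; K; e; K'] H2); solve_path|].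
      apply (homotopic_app [] [w] H3); simpl in C2 |- *; tauto.
Qed.

End C3Geometry.

Theorem mainTheorem6 (X : Type) (t : X -> ctype) (I : X -> X -> Prop)
  (HG : C3_geometry t I) (p : X) (l : list X) :
  t p = Pt -> closed_path_at I p l ->
  exists l', primitive_path t I l' /\ homotopic I l l'.
Proof.
  intros Tp (Hpath & Hhd & Hlast).
  destruct l as [|p0 l]; [discriminate|].
  injection Hhd as ->; rewrite last_cons_default in Hlast.
  destruct (homotopic_two_line_form HG Tp Hpath)
    as (K & e & K' & f & TK & Te & TK' & Tf & Hchain & Hhom).
  rewrite Hlast in Hchain, Hhom.
  simpl in Hchain; destruct Hchain as (pK & Ke & eK' & K'f & fp & _).
  assert (f = p) as -> by (apply (incid_same_type HG fp); congruence).
  exists [p; K; e; K'; p]; split.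
  - exists p, K, e, K'; repeat split; auto.
  - eapply rst_trans; [exact Hhom|].
    apply (homotopic_app_l [p; K; e] (homotopic_shortcut K'f (incid_refl HG p) K'f)).
    repeat split; auto.
Qed.
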